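(* Let $p\ge2$. Let $(u_n)\subset L^p(\mathbb{R}^2)$ with $u_n\to u$ a.e. on $\mathbb{R}^2$, where $u\in L^p(\mathbb{R}^2)\setminus\{0\}$. Let $(v_n)$ be bounded in $L^p(\mathbb{R}^2)$ with $\sup_n B_1(|u_n|^p,|v_n|^p)<\infty$. Then there exist $n_0$ and $C>0$ such that $\|v_n\|_*\le C$ for all $n\ge n_0$. Moreover, if $B_1(|u_n|^p,|v_n|^p)\to0$ and $\|v_n\|_{L^p}\to0$, then $\|v_n\|_*\to0$.
   Context: $B_1(f,g):=\int_{\mathbb{R}^2}\int_{\mathbb{R}^2}\log(1+|x-y|)f(x)g(y)\,dx\,dy$ (for nonnegative $f,g$ this is in $[0,\infty]$). $\|v\|_*:=\big(\int_{\mathbb{R}^2}\log(1+|x|)|v|^p\,dx\big)^{1/p}$. *)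

From HB Require Import structures.
From mathcomp Require Import all_boot all_order all_algebra.
From mathcomp Require Import all_classical all_reals all_analysis.
Set Implicit Arguments. Unset Strict Implicit. Unset Printing Implicit Defensive.
Import Order.TTheory GRing.Theory Num.Theory.
Import numFieldNormedType.Exports.
Local Open Scope classical_set_scope.
Local Open Scope ring_scope.

(* The plane R^2 is modelled as R * R with the product sigma-algebra. *)
Definition leb2 (R : realType) :=
  (@lebesgue_measure R \x @lebesgue_measure R)%E.
Arguments leb2 : clear implicits.

Definition enorm2 (R : realType) (x : R * R) : R :=
  Num.sqrt (x.1 ^+ 2 + x.2 ^+ 2).

Definition B1 (R : realType) (f g : R * R -> R) : \bar R :=
  (\int[leb2 R]_x \int[leb2 R]_y
     (ln (1 + enorm2 (x.1 - y.1, x.2 - y.2)) * f x * g y)%:E)%E.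

Definition powabs (R : realType) (p : R) (v : R * R -> R) : R * R -> R :=
  fun x => `|v x| `^ p.

Definition starnorm (R : realType) (p : R) (v : R * R -> R) : \bar R :=
  ((\int[leb2 R]_x (ln (1 + enorm2 x) * `|v x| `^ p)%:E) `^ p^-1)%E.

Definition inLp (R : realType) (p : R) (v : R * R -> R) : Prop :=
  measurable_fun setT v /\ (\int[leb2 R]_x (`|v x| `^ p)%:E < +oo)%E.

Definition Lpnorm (R : realType) (p : R) (v : R * R -> R) : \bar R :=
  Lnorm (leb2 R) p%:E (EFin \o v).

From HB Require Import structures.
From mathcomp Require Import all_boot all_order all_algebra.
From mathcomp Require Import all_classical all_reals all_analysis.
From mathcomp Require Import ring lra measurable_realfun.
Import Order.TTheory GRing.Theory Num.Theory.
Import numFieldNormedType.Exports.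
Local Open Scope classical_set_scope.
Local Open Scope ring_scope.
Set Implicit Arguments. Unset Strict Implicit.

(* Write l(z) = log(1 + |z|).  From 1 + |y| <= (1 + |x - y|)(1 + |x|) we get
   l(y) <= l(x - y) + l(x).  Integrating f(x) g(y) l(y) over E x R^2, where
   f >= δ and l <= L on E, yields the localization inequality
      δ |E| int l g <= B_1(f, g) + δ |E| L int g.
   Since u_n -> u a.e. and u is not a.e. zero, one of the sets
      E_m = {x in [-(m+1), m+1]^2 | |u_n(x)| >= 1/(m+1) for all n >= m}
   has positive (and finite) measure.  Applying the localization on E_m to
   f = |u_n|^p, g = |v_n|^p gives, for n >= m and a constant c > 0,
      int l |v_n|^p <= c (B_1(|u_n|^p, |v_n|^p) + ||v_n||_p^p),
   and ||v_n||_* is the p-th root of the left-hand side.  Both claims follow: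
   bounds on the right give a bound on ||v_n||_*, and if the right-hand side
   tends to 0 then so does ||v_n||_*. *)

Section EuclideanPlane.
Variable R : realType.
Implicit Types (x y : R * R) (a b c d : R).

Lemma enorm2_ge0 x : 0 <= enorm2 x.
Proof. exact: sqrtr_ge0. Qed.

Lemma enorm2_sqr x : enorm2 x ^+ 2 = x.1 ^+ 2 + x.2 ^+ 2.
Proof. by rewrite /enorm2 sqr_sqrtr // addr_ge0 // sqr_ge0. Qed.

Lemma cauchy_schwarz2 a b c d : a * c + b * d <= enorm2 (a, b) * enorm2 (c, d).
Proof.
have nab := enorm2_ge0 (a, b); have ncd := enorm2_ge0 (c, d).
have sq : (a * c + b * d) ^+ 2 <= (enorm2 (a, b) * enorm2 (c, d)) ^+ 2.
  by rewrite exprMn !enorm2_sqr /=; have := sqr_ge0 (a * d - b * c); nra.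
have : 0 <= enorm2 (a, b) * enorm2 (c, d) by exact: mulr_ge0.
nra.
Qed.

Lemma enorm2_triangle a b c d :
  enorm2 (a + c, b + d) <= enorm2 (a, b) + enorm2 (c, d).
Proof.
have := enorm2_ge0 (a + c, b + d); have := enorm2_ge0 (a, b).
have := enorm2_ge0 (c, d); have := cauchy_schwarz2 a b c d.
have := enorm2_sqr (a + c, b + d); have := enorm2_sqr (a, b).
have := enorm2_sqr (c, d); rewrite /=; nra.
Qed.

Lemma enorm2_square x k : `|x.1| <= k -> `|x.2| <= k -> enorm2 x <= 2 * k.
Proof.
move=> /ler_normlP [? ?] /ler_normlP [? ?].
have := enorm2_ge0 x; have := enorm2_sqr x; nra.
Qed.

Definition logw (z : R * R) : R := ln (1 + enorm2 z).

Lemma logw_ge0 z : 0 <= logw z.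
Proof. by apply: ln_ge0; rewrite lerDl enorm2_ge0. Qed.

(* Subadditivity of the weight, from 1 + |y| <= (1 + |x - y|) (1 + |x|). *)
Lemma logw_le_shift x y : logw y <= logw (x.1 - y.1, x.2 - y.2) + logw x.
Proof.
move: x y => [x1 x2] [y1 y2] /=.
have tri : enorm2 (y1, y2) <= enorm2 (x1 - y1, x2 - y2) + enorm2 (x1, x2).
  have -> : enorm2 (x1 - y1, x2 - y2) = enorm2 (y1 - x1, y2 - x2).
    by rewrite /enorm2 /= -sqrrN opprB -[(x2 - y2) ^+ 2]sqrrN opprB.
  by have := enorm2_triangle (y1 - x1) (y2 - x2) x1 x2; rewrite !subrK.
move: tri (enorm2_ge0 (y1, y2)) (enorm2_ge0 (x1, x2)) (enorm2_ge0 (x1 - y1, x2 - y2)).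
rewrite /logw; set ny := enorm2 _; set nx := enorm2 _; set nxy := enorm2 _.
move=> tri ny0 nx0 nxy0.
by rewrite -lnM ?ler_ln ?posrE ?mulr_gt0 ?ltr_wpDr //; nra.
Qed.

Lemma measurable_logw_pair (disp : measure_display) (T : measurableType disp)
    (f g : T -> R) :
  measurable_fun setT f -> measurable_fun setT g ->
  measurable_fun setT (fun t => logw (f t, g t)).
Proof.
move=> mf mg; rewrite /logw.
apply: measurableT_comp; first exact: measurable_ln.
apply: measurable_funD; first exact: measurable_cst.
rewrite /enorm2 /=.
apply: measurableT_comp.
  exact: continuous_measurable_fun (@sqrt_continuous R).
by apply: measurable_funD; apply: measurable_funX.
Qed.

End EuclideanPlane.

Section Localization.
Variable R : realType.
Local Notation mu := (leb2 R).
Local Notation T := (measurableTypeR R * measurableTypeR R)%type.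

(* Lebesgue measure on the plane is sigma-finite, as required by Tonelli. *)
HB.instance Definition _ := Measure.on mu.

Lemma leb2_sigma_finite : sigma_finite setT mu.
Proof.
have /sigma_finiteP[F [TF ndF Foo]] := sigma_finiteT (@lebesgue_measure R).
exists (fun n => F n `*` F n).
  rewrite -setXTT TF predeqE => -[x y]; split.
    move=> [/= [n _ Fnx] [k _ Fky]]; exists (maxn n k) => //; split.
    - by move: x Fnx; exact/subsetPset/ndF/leq_maxl.
    - by move: y Fky; exact/subsetPset/ndF/leq_maxr.
  by move=> [n _ []/= ? ?]; split; exists n.
move=> k; have [? ?] := Foo k; split; first exact: measurableX.
by rewrite /leb2 product_measure1E // lte_mul_pinfty // ge0_fin_numE.
Qed.

HB.instance Definition _ := Measure_isSigmaFinite.Build _ _ _ mu leb2_sigma_finite.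

Definition wmass (g : T -> R) : \bar R := (\int[mu]_y (logw y * g y)%:E)%E.
Definition mass (g : T -> R) : \bar R := (\int[mu]_y (g y)%:E)%E.

Section Densities.
Variables f g : T -> R.
Hypotheses (mf : measurable_fun setT f) (mg : measurable_fun setT g).
Hypotheses (f0 : forall x, 0 <= f x) (g0 : forall y, 0 <= g y).

Let kernel (z : T * T) : \bar R :=
  (logw (z.1.1 - z.2.1, z.1.2 - z.2.2) * f z.1 * g z.2)%:E.

Let kernel_ge0 z : (0 <= kernel z)%E.
Proof. by rewrite lee_fin !mulr_ge0 ?logw_ge0. Qed.

Let measurable_kernel : measurable_fun setT kernel.
Proof.
apply/measurable_EFinP; apply: measurable_funM; last first.
  exact: measurableT_comp mg measurable_snd.
apply: measurable_funM; last exact: measurableT_comp mf measurable_fst.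
by apply: measurable_logw_pair; apply: measurable_funB;
  apply: measurableT_comp; exact: measurable_fst || exact: measurable_snd.
Qed.

Let measurable_wdensity : measurable_fun setT (fun y => (logw y * g y)%:E).
Proof.
apply/measurable_EFinP; apply: measurable_funM => //.
exact: measurable_logw_pair measurable_fst measurable_snd.
Qed.

Lemma fiber_localization x (δ L : R) : 0 <= δ -> 0 <= L ->
  δ <= f x -> logw x <= L ->
  (δ%:E * wmass g <= \int[mu]_y kernel (x, y) + (δ * L)%:E * mass g)%E.
Proof.
move=> δ0 L0 δf Lx.
have mgE : measurable_fun setT (fun y => (g y)%:E) by exact/measurable_EFinP.
have gE0 (y : T) : setT y -> (0 <= (g y)%:E)%E by rewrite lee_fin.
have wgE0 (y : T) : setT y -> (0 <= (logw y * g y)%:E)%E.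
  by rewrite lee_fin mulr_ge0 ?logw_ge0.
rewrite /wmass /mass -(ge0_integralZl_EFin _ _ wgE0 measurable_wdensity δ0) //.
rewrite -(ge0_integralZl_EFin _ _ gE0 mgE (mulr_ge0 δ0 L0)) //.
have mkx : measurable_fun setT (fun y => kernel (x, y)).
  exact: measurable_fun_pair2 measurable_kernel.
have mdgE := measurable_funeM (δ * L)%:E mgE.
rewrite -(ge0_integralD _ _ (fun y _ => kernel_ge0 (x, y)) mkx _ mdgE) //; last first.
  by move=> y _; rewrite lee_fin !mulr_ge0.
apply: ge0_le_integral => //.
- by move=> y _; rewrite lee_fin !mulr_ge0 ?logw_ge0.
- exact: measurable_funeM.
- exact: emeasurable_funD.
move=> y _; rewrite /kernel /= -EFinD lee_fin.
have shift := logw_le_shift x y.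
set lxy := logw (x.1 - y.1, x.2 - y.2) in shift *.
have lxy0 : 0 <= lxy by exact: logw_ge0.
have wy : logw y * g y <= (lxy + L) * g y by apply: ler_wpM2r => //; lra.
have fx : δ * lxy * g y <= f x * lxy * g y by rewrite !ler_wpM2r.
nra.
Qed.

Lemma localization (E : set T) (δ L : R) : measurable E -> 0 <= δ -> 0 <= L ->
  (forall x, E x -> δ <= f x /\ logw x <= L) ->
  ((δ%:E * mu E) * wmass g <= B1 f g + (δ%:E * mu E) * (L%:E * mass g))%E.
Proof.
move=> mE δ0 L0 hE.
pose I x := (\int[mu]_y kernel (x, y))%E.
have mI : measurable_fun setT I by exact: measurable_fun_fubini_tonelli_F.
have I0 x : (0 <= I x)%E by exact: integral_ge0.
have c0 : (0 <= (δ * L)%:E * mass g)%E.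
  by rewrite mule_ge0 ?lee_fin ?mulr_ge0 // integral_ge0 // => y _; rewrite lee_fin.
rewrite muleAC [X in (_ <= _ + X)%E]muleAC muleA -EFinM -!integral_cst //.
apply: (@le_trans _ _ (\int[mu]_(x in E) (I x + (δ * L)%:E * mass g))%E).
  apply: ge0_le_integral => //.
  - by move=> x _; rewrite mule_ge0 ?lee_fin // integral_ge0 // => y _;
      rewrite lee_fin mulr_ge0 ?logw_ge0.
  - by apply: emeasurable_funD; [exact: measurable_funS mI | exact: measurable_cst].
  by move=> x /hE[]; exact: fiber_localization.
rewrite ge0_integralD //; last exact: measurable_funS mI.
by rewrite leeD2r // ge0_subset_integral.
Qed.

End Densities.
End Localization.

Section NondegenerateSet.
Variable R : realType.
Local Notation mu := (leb2 R).
Local Notation T := (measurableTypeR R * measurableTypeR R)%type.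

Lemma measurable_ge_set (F : T -> R) (a : R) :
  measurable_fun setT F -> measurable [set x | a <= F x].
Proof.
by move=> mF; rewrite -preimage_itvcy -[_ @^-1` _]setTI; apply: mF.
Qed.

Lemma measurable_le_set (F : T -> R) (a : R) :
  measurable_fun setT F -> measurable [set x | F x <= a].
Proof.
by move=> mF; rewrite -preimage_itvNyc -[_ @^-1` _]setTI; apply: mF.
Qed.

Definition square (k : R) : set T := [set x | `|x.1| <= k] `&` [set x | `|x.2| <= k].

Lemma measurable_square k : measurable (square k).
Proof.
by apply: measurableI; apply: measurable_le_set; apply: measurableT_comp.
Qed.

Lemma square_finite k : (mu (square k) < +oo)%E.
Proof.
pose I : set (measurableTypeR R) := [set` `[- k, k]].
have mI : measurable I by exact: measurable_itv.
have Ifin : (@lebesgue_measure R I < +oo)%E.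
  by rewrite lebesgue_measure_itv /=; case: ifP => // _; rewrite -EFinB ltry.
apply: (@le_lt_trans _ _ (mu (I `*` I))).
  apply: le_measure; rewrite ?inE; [exact: measurable_square | exact: measurableX |].
  by move=> x [h1 h2]; split; rewrite /I /= in_itv /= -ler_norml.
by rewrite /leb2 product_measure1E // lte_mul_pinfty // ge0_fin_numE.
Qed.

Variable u_ : nat -> T -> R.
Hypothesis mu_ : forall n, measurable_fun setT (u_ n).

(* E_m: the points of the square [-(m+1), m+1]^2 at which |u_n| >= 1/(m+1)
   for every n >= m.  On E_m, |u_n|^p is bounded below uniformly in n >= m. *)
Definition nondeg_set (m : nat) : set T :=
  square m.+1%:R `&` \bigcap_i [set x | (m.+1%:R)^-1 <= `|u_ (i + m)%N x|].

Lemma measurable_nondeg_set m : measurable (nondeg_set m).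
Proof.
apply: measurableI; first exact: measurable_square.
by apply: bigcapT_measurable => i; apply: measurable_ge_set; exact: measurableT_comp.
Qed.

Lemma nondeg_set_finite m : (mu (nondeg_set m) < +oo)%E.
Proof.
apply: le_lt_trans (square_finite m.+1%:R).
apply: le_measure; rewrite ?inE; first exact: measurable_nondeg_set.
  exact: measurable_square.
by move=> x [].
Qed.

Lemma in_some_nondeg_set (u : T -> R) x :
  (fun n => u_ n x) @ \oo --> u x -> u x != 0 -> exists m, nondeg_set m x.
Proof.
move=> ux ux0; set a := `|u x|; have a0 : 0 < a by rewrite normr_gt0.
have [N _ hN] := (cvgrPdist_le _ _).1 ux (a / 2) (divr_gt0 a0 (ltr0n _ 2)).
pose m := maxn N
  (maxn (Num.truncn `|x.1|) (maxn (Num.truncn `|x.2|) (Num.truncn (2 / a)))).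
have le_m (r : R) : 0 <= r -> (Num.truncn r <= m)%N -> r <= m.+1%:R.
  move=> r0 rm; apply/ltW; apply: (lt_le_trans (truncnS_gt r)).
  by rewrite ler_nat ltnS.
exists m; split; first split.
- by apply: le_m => //; rewrite /m !leq_max leqnn !orbT.
- by apply: le_m => //; rewrite /m !leq_max leqnn !orbT.
move=> i _ /=.
have /hN : (N <= i + m)%N by rewrite (leq_trans _ (leq_addl i m)) // leq_max leqnn.
have := lerB_dist (u x) (u_ (i + m)%N x); rewrite -/a /= => hd hi.
have a2 : 2 / a <= m.+1%:R.
  by apply: le_m; rewrite ?divr_ge0 ?ltW // /m !leq_max leqnn !orbT.
have half : a / 2 <= `|u_ (i + m)%N x| by lra.
apply: le_trans half.
by rewrite -[a / 2]invrK lef_pV2 ?posrE ?invr_gt0 ?divr_gt0 ?ltr0n // invf_div.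
Qed.

Lemma nondeg_set_pos (u : T -> R) :
  {ae mu, forall x, (fun n => u_ n x) @ \oo --> u x} ->
  ~ {ae mu, forall x, u x = 0} ->
  exists m, (0 < mu (nondeg_set m))%E.
Proof.
move=> hc hnz; apply: contrapT => /forallNP null; apply: hnz.
have null0 m : mu (nondeg_set m) = 0.
  by apply/eqP; rewrite eq_le measure_ge0 andbT leNgt; apply/negP/null.
have : {ae mu, forall x, forall m, ~ nondeg_set m x}.
  apply: ae_foralln => m; exists (nondeg_set m).
  by split; [exact: measurable_nondeg_set | exact: null0 | move=> x /= /contrapT].
apply: filterS2 hc => x ux notin; apply/eqP; apply: contrapT => /negP ux0.
by have [m] := in_some_nondeg_set ux ux0; exact: notin.
Qed.

End NondegenerateSet.

Section NonnegSequences.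
Variable R : realType.
Local Open Scope ereal_scope.
Implicit Types a b : nat -> \bar R.

Lemma poweR_le_EFin (x : \bar R) (c r : R) : (0 <= r)%R -> 0 <= x -> x <= c%:E ->
  x `^ r <= (c `^ r)%:E.
Proof.
move=> r0 x0 xc; rewrite -poweR_EFin; apply: gt0_ler_poweR => //.
- by rewrite in_itv /= x0 leey.
- by rewrite in_itv /= (le_trans x0 xc) leey.
Qed.

Lemma nonneg_cvge0P a : (forall n, 0 <= a n) ->
  a @ \oo --> 0 <-> forall e : R, (0 < e)%R -> \forall n \near \oo, a n <= e%:E.
Proof.
move=> a0; split.
  move=> /fine_cvgP[afin /cvgrPdist_le afine] e e0.
  apply: filterS2 afin (afine e e0) => n an /=; rewrite sub0r normrN => ane.
  by rewrite -(fineK an) lee_fin (le_trans (ler_norm _)).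
have fin_a n : a n <= 1%:E -> a n \is a fin_num.
  by move=> an1; rewrite ge0_fin_numE // (le_lt_trans an1) ?ltry.
move=> small; apply/fine_cvgP; split; first exact: filterS (small 1%R ltr01).
apply/cvgrPdist_le => e e0; apply: filterS2 (small 1%R ltr01) (small e e0).
move=> n /fin_a an ane /=; rewrite sub0r normrN ger0_norm ?fine_ge0 //.
by rewrite -lee_fin fineK.
Qed.

Lemma poweR_cvge0 a (r : R) : (forall n, 0 <= a n) -> (0 < r)%R ->
  a @ \oo --> 0 -> (fun n => a n `^ r) @ \oo --> 0.
Proof.
move=> a0 r0 /(nonneg_cvge0P a0) small.
apply/nonneg_cvge0P => [n|e e0]; first exact: poweR_ge0.
apply: filterS (small _ (powR_gt0 r^-1 e0)) => n an.
apply: le_trans (poweR_le_EFin (ltW r0) (a0 n) an) _.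
by rewrite -powRrM mulVf ?gt_eqF // powRr1 // ltW.
Qed.

Lemma dominated_cvge0 a b (c : R) : (forall n, 0 <= a n) ->
  (\forall n \near \oo, a n <= c%:E * b n) -> b @ \oo --> 0 -> a @ \oo --> 0.
Proof.
move=> a0 dom b0; apply: (@squeeze_cvge _ _ _ _ (cst 0) _ (fun n => c%:E * b n)).
- by apply: filterS dom => n ->; rewrite a0.
- exact: cvg_cst.
- by rewrite -(mule0 c%:E); exact: cvgeZl.
Qed.

End NonnegSequences.

Section LpNorm.
Variable R : realType.

Lemma Lpnorm_ge0 (p : R) (v : R * R -> R) : (0 <= Lpnorm p v)%E.
Proof. by rewrite /Lpnorm unlock; exact: poweR_ge0. Qed.

Lemma mass_powabs (p : R) (v : R * R -> R) : 0 < p ->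
  mass (powabs p v) = (Lpnorm p v `^ p)%E.
Proof.
move=> p0; rewrite /Lpnorm unlock /= -poweRrM mulVf ?gt_eqF // poweRe1 //.
by apply: integral_ge0 => x _; rewrite lee_fin powR_ge0.
Qed.

Lemma starnormE (p : R) (v : R * R -> R) :
  starnorm p v = (wmass (powabs p v) `^ p^-1)%E.
Proof. by []. Qed.

End LpNorm.

Section WeightedBound.
Variable R : realType.
Local Notation mu := (leb2 R).
Local Notation T := (measurableTypeR R * measurableTypeR R)%type.
Variables (p : R) (u_ v_ : nat -> T -> R) (u : T -> R).
Hypothesis p_gt0 : 0 < p.
Hypothesis mu_ : forall n, measurable_fun setT (u_ n).
Hypothesis mv_ : forall n, measurable_fun setT (v_ n).
Hypothesis u_cvg : {ae mu, forall x, (fun n => u_ n x) @ \oo --> u x}.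
Hypothesis u_neq0 : ~ {ae mu, forall x, u x = 0}.

Local Notation B n := (B1 (powabs p (u_ n)) (powabs p (v_ n))).
Local Notation S n := (wmass (powabs p (v_ n))).
Local Notation N n := (mass (powabs p (v_ n))).

Let measurable_powabs (w : T -> R) :
  measurable_fun setT w -> measurable_fun setT (powabs p w).
Proof.
by move=> mw; apply: measurableT_comp (measurable_powR p) _; exact: measurableT_comp.
Qed.

Let B_ge0 n : (0 <= B n)%E.
Proof.
apply: integral_ge0 => x _; apply: integral_ge0 => y _.
by rewrite lee_fin !mulr_ge0 ?powR_ge0 // (logw_ge0 (x.1 - y.1, x.2 - y.2)).
Qed.

Let N_ge0 n : (0 <= N n)%E.
Proof. by apply: integral_ge0 => y _; rewrite lee_fin powR_ge0. Qed.

Let S_ge0 n : (0 <= S n)%E.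
Proof.
by apply: integral_ge0 => y _; rewrite lee_fin mulr_ge0 ?logw_ge0 ?powR_ge0.
Qed.

(* The key estimate: localizing B_1 on a nondegenerate set E_m of positive
   measure gives, for n >= m, int log(1+|y|)|v_n|^p <= c (B_1 + ||v_n||_p^p). *)
Lemma weighted_mass_bound : exists (m : nat) (c : R), 0 < c /\
  forall n, (m <= n)%N -> (S n <= c%:E * (B n + N n))%E.
Proof.
have [m Epos] := nondeg_set_pos mu_ u_cvg u_neq0.
set E := nondeg_set u_ m; set k : R := m.+1%:R.
have [a Ea] : exists a, mu E = a%:E.
  by exists (fine (mu E)); rewrite fineK // ge0_fin_numE ?nondeg_set_finite.
have a_gt0 : 0 < a by rewrite -lte_fin -Ea.
set δ := k^-1 `^ p; set L := ln (1 + 2 * k).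
have δ_gt0 : 0 < δ by rewrite powR_gt0 // invr_gt0.
have L_ge0 : 0 <= L by apply: ln_ge0; rewrite lerDl mulr_ge0.
have lowE n : (m <= n)%N -> forall x, E x -> δ <= powabs p (u_ n) x /\ logw x <= L.
  move=> mn x [[x1 x2] ux]; split.
    have := ux (n - m)%N I; rewrite /= subnK // => kux.
    by apply: ge0_ler_powR => //; rewrite ?nnegrE ?invr_ge0 ?ltW.
  rewrite /logw /L ler_ln ?posrE ?ltr_wpDr ?enorm2_ge0 ?mulr_ge0 ?ler0n //.
  by rewrite lerD2l; exact: enorm2_square.
exists m, ((δ * a)^-1 + L); split; first by rewrite ltr_wpDr // invr_gt0 mulr_gt0.
move=> n mn; set r := δ * a; have r_gt0 : 0 < r by rewrite mulr_gt0.
have loc := localization (measurable_powabs (mu_ n)) (measurable_powabs (mv_ n))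
  (fun x => powR_ge0 _ _) (fun x => powR_ge0 _ _) (measurable_nondeg_set mu_ m)
  (ltW δ_gt0) L_ge0 (lowE n mn).
rewrite Ea -EFinM -/r -lee_pdivlMl // in loc.
apply: le_trans loc _.
have LN_ge0 : (0 <= r%:E * (L%:E * N n))%E.
  by rewrite !mule_ge0 ?lee_fin // ltW.
rewrite ge0_muleDr // [X in (_ + X <= _)%E]muleA -EFinM mulVf ?gt_eqF // mul1e.
rewrite [in leRHS]ge0_muleDr //.
apply: leeD; apply: lee_wpmul2r => //; rewrite lee_fin ?lerDl ?lerDr //.
by rewrite invr_ge0 ltW.
Qed.

Lemma starnorm_eventually_bounded (M K : R) :
  (forall n, (B n <= M%:E)%E) -> (forall n, (Lpnorm p (v_ n) <= K%:E)%E) ->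
  exists (n0 : nat) (C : R), 0 < C /\
    forall n, (n0 <= n)%N -> (starnorm p (v_ n) <= C%:E)%E.
Proof.
move=> BM vK; have [m [c [c_gt0 Sbound]]] := weighted_mass_bound.
set C := c * (M + K `^ p).
exists m, (C `^ p^-1 + 1); split; first by rewrite ltr_wpDl ?powR_ge0.
move=> n mn.
have SC : (S n <= C%:E)%E.
  apply: le_trans (Sbound n mn) _; rewrite /C EFinM.
  apply: lee_wpmul2l; first by rewrite lee_fin ltW.
  rewrite EFinD; apply: leeD => //; rewrite mass_powabs //.
  exact: poweR_le_EFin (ltW p_gt0) (Lpnorm_ge0 _ _) (vK n).
rewrite starnormE; apply: le_trans (poweR_le_EFin _ (S_ge0 n) SC) _.
  by rewrite invr_ge0 ltW.
by rewrite lee_fin lerDl.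
Qed.

Lemma starnorm_cvg0 : B n @[n --> \oo] --> 0%E ->
  Lpnorm p (v_ n) @[n --> \oo] --> 0%E -> starnorm p (v_ n) @[n --> \oo] --> 0%E.
Proof.
move=> B_cvg0 vL_cvg0; have [m [c [_ Sbound]]] := weighted_mass_bound.
have N_cvg0 : N n @[n --> \oo] --> 0%E.
  under eq_fun do rewrite mass_powabs //.
  by apply: poweR_cvge0 => // n; exact: Lpnorm_ge0.
under eq_fun do rewrite starnormE.
apply: poweR_cvge0 => //; first by rewrite invr_gt0.
have BN_cvg0 : (B n + N n)%E @[n --> \oo] --> 0%E.
  by rewrite -(adde0 0%E); exact: cvgeD.
apply: (dominated_cvge0 S_ge0 _ BN_cvg0).
by exists m => // n /=; exact: Sbound.
Qed.

End WeightedBound.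

(* Lemma 3.2. *)
Theorem lemma3p2 (R : realType) (p : R) (u_ v_ : nat -> R * R -> R) (u : R * R -> R) :
  2 <= p ->
  (forall n, inLp p (u_ n)) ->
  inLp p u ->
  {ae leb2 R, forall x, (fun n => u_ n x) @ \oo --> u x} ->
  ~ {ae leb2 R, forall x, u x = 0} ->
  (forall n, inLp p (v_ n)) ->
  (exists M : R, forall n, (Lpnorm p (v_ n) <= M%:E)%E) ->
  (exists M : R, forall n, (B1 (powabs p (u_ n)) (powabs p (v_ n)) <= M%:E)%E) ->
  (exists (n0 : nat) (C : R), 0 < C /\
     forall n, (n0 <= n)%N -> (starnorm p (v_ n) <= C%:E)%E)
  /\
  ((fun n => B1 (powabs p (u_ n)) (powabs p (v_ n))) @ \oo --> 0%E ->
   (fun n => Lpnorm p (v_ n)) @ \oo --> 0%E ->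
   (fun n => starnorm p (v_ n)) @ \oo --> 0%E).
Proof.
move=> p_ge2 hu _ u_cvg u_neq0 hv [K vK] [M BM].
have p_gt0 : 0 < p by apply: lt_le_trans p_ge2.
have mu_ n := (hu n).1; have mv_ n := (hv n).1.
have bounded := starnorm_eventually_bounded p_gt0 mu_ mv_ u_cvg u_neq0 BM vK.
have null := starnorm_cvg0 p_gt0 mu_ mv_ u_cvg u_neq0.
by split.
Qed.
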